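(* Let $n \ge 1$, $K \ge 1$, let $\mu_1,\dots,\mu_K \in \mathbb{R}^n$, let $\Sigma_1,\dots,\Sigma_K \in \mathbb{R}^{n\times n}$ be symmetric positive-definite matrices, let $\kappa_1,\dots,\kappa_K \in [0,1)$, and let $\epsilon \le 0$. For $k=1,\dots,K$ put $r_k := \sqrt{F^{-1}_{\chi^2_n}(\kappa_k)}$ and define the closed set $$\overline{R} := \bigcup_{k=1}^K \left\{ x \in \mathbb{R}^n \;\middle|\; (x-\mu_k)^T\Sigma_k^{-1}(x-\mu_k) \le r_k^2 \right\}.$$ For $p \in \mathbb{R}^n$ with $p\neq\mu_k$ for all $k$, define $$S(p) := \left\{ x \in \mathbb{R}^n \;\middle|\; \frac{(\mu_k - p)^{T}\Sigma_k^{-1}(x-p)}{\big\|\Sigma_k^{-1/2}(\mu_k - p)\big\|^2} \le \max\!\left(1 - \frac{r_k}{\big\|\Sigma_k^{-1/2}(\mu_k-p)\big\|},\, \epsilon\right) \text{ for all } k=1,\dots,K \right\}.$$ Then for every $p \in \mathbb{R}^n \setminus \overline{R}$, the point $p$ lies in the interior $\mathring{S}(p)$ of $S(p)$, and $\mathring{S}(p) \subseteq \mathbb{R}^n \setminus \overline{R}$.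
   Context: $F_{\chi^2_n}$ denotes the cumulative distribution function of the chi-squared distribution with $n$ degrees of freedom, and $F^{-1}_{\chi^2_n}$ its inverse. $\|\cdot\|$ is the Euclidean norm. For a symmetric positive-definite $\Sigma = V\,\mathrm{diag}(\sigma_1,\dots,\sigma_n)V^T$ (orthogonal $V$, $\sigma_i>0$), $\Sigma^{-1/2} := V\,\mathrm{diag}(\sigma_1^{-1/2},\dots,\sigma_n^{-1/2})V^T$. The set $\overline{R}$ is the approximate confidence region of a Gaussian mixture model (union of the level-$\kappa_k$ confidence ellipsoids of its components $\mathcal N(\mu_k,\Sigma_k)$), and $S(p)$ is the probabilistically safe corridor around $p$, bounded by hyperplanes tangent to these ellipsoids. Note every $p\notin\overline{R}$ automatically satisfies $p\neq\mu_k$ for all $k$. *)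

From HB Require Import structures.
From mathcomp Require Import all_boot all_order all_algebra.
From mathcomp Require Import all_classical all_reals all_analysis.
Set Implicit Arguments. Unset Strict Implicit. Unset Printing Implicit Defensive.
Import Order.TTheory GRing.Theory Num.Theory.
Import numFieldNormedType.Exports.
Local Open Scope classical_set_scope.
Local Open Scope ring_scope.

Definition chi2_density {R : realType} (n : nat) (t : R) : R :=
  if 0 < t then (t `^ (n%:R / 2 - 1)) * expR (- t / 2) else 0.

(* CDF of chi^2_n : F(x) = (int_0^x density) / (int_0^oo density)
   (the denominator equals 2^(n/2) Gamma(n/2)). *)
Definition chi2_cdf {R : realType} (n : nat) (x : R) : R :=
  fine (\int[lebesgue_measure]_(t in [set t : R | (0 <= t <= x)%R]) ((chi2_density n t)%:E))%E /
  fine (\int[lebesgue_measure]_(t in [set t : R | (0 <= t)%R]) ((chi2_density n t)%:E))%E.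

Definition chi2_inv_cdf {R : realType} (n : nat) (kappa : R) : R :=
  inf [set x : R | 0 <= x /\ kappa <= chi2_cdf n x].

Definition enorm {R : realType} {n : nat} (v : 'cV[R]_n) : R :=
  Num.sqrt (\sum_(i < n) v i 0 ^+ 2).

(* Sigma^{-1/2} := V diag(sigma_1^{-1/2}, ..., sigma_n^{-1/2}) V^T, computed from an
   eigendecomposition Sigma = V diag(sigma) V^T (V orthogonal, sigma_i > 0). *)
Definition inv_sqrt_from {R : realType} {n : nat} (V : 'M[R]_n) (sigma : 'rV[R]_n)
  : 'M[R]_n :=
  V *m diag_mx (\row_i (Num.sqrt (sigma 0 i))^-1) *m V^T.

Definition sym_posdef {R : realType} {n : nat} (S : 'M[R]_n) : Prop :=
  S^T = S /\ forall x : 'cV[R]_n, x != 0 -> 0 < (x^T *m S *m x) 0 0.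

Definition eig_decomp {R : realType} {n : nat} (S V : 'M[R]_n) (sigma : 'rV[R]_n)
  : Prop :=
  V *m V^T = 1%:M /\ V^T *m V = 1%:M /\ (forall i, 0 < sigma 0 i) /\
  S = V *m diag_mx sigma *m V^T.

Definition conf_radius {R : realType} (n : nat) (kappa : R) : R :=
  Num.sqrt (chi2_inv_cdf n kappa).

Definition conf_region {R : realType} {n K : nat} (mu : 'I_K -> 'cV[R]_n)
  (Sigma : 'I_K -> 'M[R]_n) (kappa : 'I_K -> R) : set 'cV[R]_n :=
  [set x | exists k : 'I_K,
     ((x - mu k)^T *m invmx (Sigma k) *m (x - mu k)) 0 0 <= conf_radius n (kappa k) ^+ 2].

(* The probabilistically safe corridor S(p); SigInvSqrt k plays the role of Sigma_k^{-1/2}. *)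
Definition safe_corridor {R : realType} {n K : nat} (mu : 'I_K -> 'cV[R]_n)
  (Sigma SigInvSqrt : 'I_K -> 'M[R]_n) (kappa : 'I_K -> R) (eps : R)
  (p : 'cV[R]_n) : set 'cV[R]_n :=
  [set x | forall k : 'I_K,
     ((mu k - p)^T *m invmx (Sigma k) *m (x - p)) 0 0
       / enorm (SigInvSqrt k *m (mu k - p)) ^+ 2
     <= Num.max (1 - conf_radius n (kappa k) / enorm (SigInvSqrt k *m (mu k - p))) eps].

From HB Require Import structures.
From mathcomp Require Import all_boot all_order all_algebra.
From mathcomp Require Import all_classical all_reals all_analysis.
From mathcomp Require Import ring.
Import Order.TTheory GRing.Theory Num.Theory.
Import numFieldNormedType.Exports.
Local Open Scope classical_set_scope.
Local Open Scope ring_scope.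

(* Whitening by A_k = Sigma_k^{-1/2} turns the k-th ellipsoid into the ball of
   radius r_k around A_k mu_k and, with u_k = A_k (mu_k - p) and N_k = |u_k|,
   the k-th constraint of S(p) into the half-space
   <u_k, A_k (x - p)> <= N_k^2 - r_k N_k: since p lies outside the ellipsoid,
   N_k > r_k, so the max is attained at 1 - r_k / N_k > 0 >= eps.  The strict
   half-spaces are open and contain p, so p is interior.  An interior point x
   of S(p) satisfies every constraint strictly (it can still move towards
   mu_k), and then Cauchy-Schwarz gives
   r_k N_k < <u_k, u_k - A_k (x - p)> <= N_k |A_k (mu_k - x)|,
   i.e. x lies outside the k-th ellipsoid. *)

Section DotProduct.
Context {R : comNzRingType} {n : nat}.
Implicit Types u v w : 'cV[R]_n.

Definition dot u v : R := (u^T *m v) 0 0.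

Lemma dot_sum u v : dot u v = \sum_i u i 0 * v i 0.
Proof. by rewrite /dot mxE; apply: eq_bigr => i _; rewrite mxE. Qed.

Lemma dotC u v : dot u v = dot v u.
Proof. by rewrite /dot -(trmxK (v^T *m u)) trmx_mul trmxK [RHS]mxE. Qed.

Lemma dotDr u v w : dot u (v + w) = dot u v + dot u w.
Proof. by rewrite /dot mulmxDr mxE. Qed.

Lemma dotNr u v : dot u (- v) = - dot u v.
Proof. by rewrite /dot mulmxN mxE. Qed.

Lemma dotBr u v w : dot u (v - w) = dot u v - dot u w.
Proof. by rewrite dotDr dotNr. Qed.

Lemma dotZr a u v : dot u (a *: v) = a * dot u v.
Proof. by rewrite /dot -scalemxAr mxE. Qed.

Lemma dotDl u v w : dot (v + w) u = dot v u + dot w u.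
Proof. by rewrite dotC dotDr !(dotC u). Qed.

Lemma dotNl u v : dot (- v) u = - dot v u.
Proof. by rewrite dotC dotNr dotC. Qed.

Lemma dotZl a u v : dot (a *: v) u = a * dot v u.
Proof. by rewrite dotC dotZr dotC. Qed.

Lemma dot_mulmx (A : 'M[R]_n) u v :
  (u^T *m (A^T *m A) *m v) 0 0 = dot (A *m u) (A *m v).
Proof. by rewrite /dot trmx_mul !mulmxA. Qed.

Lemma dot_mulmxr (A : 'M[R]_n) u v : dot u (A *m v) = dot (A^T *m u) v.
Proof. by rewrite /dot trmx_mul trmxK mulmxA. Qed.

End DotProduct.

Section CauchySchwarz.
Context {R : realDomainType} {n : nat}.
Implicit Types u v : 'cV[R]_n.

Lemma dot_sqr u : dot u u = \sum_i u i 0 ^+ 2.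
Proof. by rewrite dot_sum; apply: eq_bigr => i _; rewrite expr2. Qed.

Lemma dot_ge0 u : 0 <= dot u u.
Proof. by rewrite dot_sqr sumr_ge0 // => i _; rewrite sqr_ge0. Qed.

Lemma dot_eq0 u : (dot u u == 0) = (u == 0).
Proof.
apply/eqP/eqP => [u0 | ->]; last by rewrite /dot mulmx0 mxE.
apply/matrixP => i j; rewrite (ord1 j) mxE.
apply/eqP; rewrite -sqrf_eq0; apply/eqP.
by move: u0; rewrite dot_sqr => /psumr_eq0P; apply => // k _; rewrite sqr_ge0.
Qed.

Lemma dot_CauchySchwarz u v : dot u v ^+ 2 <= dot u u * dot v v.
Proof.
have [-> | v_neq0] := eqVneq v 0.
  by rewrite /dot !mulmx0 !mxE expr0n mulr0.
have vv_gt0 : 0 < dot v v by rewrite lt_def dot_eq0 v_neq0 dot_ge0.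
have := dot_ge0 (dot v v *: u - dot u v *: v).
rewrite !(dotDl, dotDr, dotNl, dotNr, dotZl, dotZr) (dotC v u).
set a := dot v v; set b := dot u v; set c := dot u u.
have -> : a * (a * c - b * b) + (a * - (b * b) - b * - (b * a)) = a * (c * a - b ^+ 2).
  by ring.
by rewrite pmulr_rge0 // subr_ge0.
Qed.

End CauchySchwarz.

Lemma mulmx_conj_diag {R : comNzRingType} {n : nat} (V : 'M[R]_n) (d e : 'rV[R]_n) :
  V^T *m V = 1%:M ->
  V *m diag_mx d *m V^T *m (V *m diag_mx e *m V^T)
  = V *m diag_mx (\row_i (d 0 i * e 0 i)) *m V^T.
Proof.
by move=> VtV; rewrite -!mulmxA (mulmxA V^T) VtV mul1mx (mulmxA (diag_mx d)) mulmx_diag.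
Qed.

Section Whitening.
Context {R : realType} {n : nat}.
Implicit Types u v : 'cV[R]_n.

Lemma enorm_sqr u : enorm u ^+ 2 = dot u u.
Proof. by rewrite dot_sqr sqr_sqrtr // sumr_ge0 // => i _; rewrite sqr_ge0. Qed.

Lemma enormE u : enorm u = Num.sqrt (dot u u).
Proof. by rewrite dot_sqr. Qed.

Lemma enorm_ge0 u : 0 <= enorm u.
Proof. exact: sqrtr_ge0. Qed.

Lemma dot_le_enorm u v : dot u v <= enorm u * enorm v.
Proof.
rewrite !enormE -sqrtrM ?dot_ge0 // (le_trans (ler_norm _)) // -sqrtr_sqr.
exact/ler_wsqrtr/dot_CauchySchwarz.
Qed.

Lemma lt_enorm_dot r u v : r * enorm u < dot u v -> r < enorm v.
Proof.
move=> lt_ru_uv; have lt_ru_uv' := lt_le_trans lt_ru_uv (dot_le_enorm u v).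
have u_gt0 : 0 < enorm u.
  rewrite lt_def enorm_ge0 andbT; apply: contraTneq lt_ru_uv' => ->.
  by rewrite mulr0 mul0r ltxx.
by rewrite -(ltr_pM2l u_gt0) mulrC.
Qed.

Lemma enormN u : enorm (- u) = enorm u.
Proof. by rewrite !enormE dotNl dotNr opprK. Qed.

Lemma halfspace_misses_ball r u w :
  dot u w < enorm u ^+ 2 - r * enorm u -> r < enorm (w - u).
Proof.
move=> uw_lt; apply: (@lt_enorm_dot _ (- u)).
by rewrite enormN dotNl dotBr opprB -enorm_sqr ltrBrDl addrC -ltrBrDl.
Qed.

Lemma invmx_eig_decomp {S V : 'M[R]_n} {sigma : 'rV[R]_n} :
  eig_decomp S V sigma ->
  invmx S = (inv_sqrt_from V sigma)^T *m inv_sqrt_from V sigma.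
Proof.
move=> [VVt [VtV [sigma_gt0 ->]]].
have A_sym : (inv_sqrt_from V sigma)^T = inv_sqrt_from V sigma.
  by rewrite /inv_sqrt_from !trmx_mul trmxK tr_diag_mx mulmxA.
rewrite A_sym /inv_sqrt_from mulmx_conj_diag //.
set X := (M in _ = M).
have SX : V *m diag_mx sigma *m V^T *m X = 1%:M.
  rewrite mulmx_conj_diag //.
  rewrite [X in diag_mx X](_ : _ = const_mx 1) ?diag_const_mx ?mulmx1 //.
  apply/rowP => i; rewrite !mxE -invfM -expr2 sqr_sqrtr ?ltW //.
  by rewrite divff // gt_eqF.
have Su : V *m diag_mx sigma *m V^T \in unitmx := (mulmx1_unit SX).1.
by rewrite -[LHS]mulmx1 -SX mulmxA mulVmx // mul1mx.
Qed.

Lemma invmx_eig_quad {S V : 'M[R]_n} {sigma : 'rV[R]_n} u v :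
  eig_decomp S V sigma ->
  (u^T *m invmx S *m v) 0 0
  = dot (inv_sqrt_from V sigma *m u) (inv_sqrt_from V sigma *m v).
Proof. by move/invmx_eig_decomp->; rewrite dot_mulmx. Qed.

End Whitening.

Section Halfspaces.
Context {R : realType} {n : nat}.
Implicit Types (g d x : 'cV[R]_n) (b : R).

Lemma continuous_dot g : continuous (dot g).
Proof.
have -> : dot g = fun y => \sum_i g i 0 * y i 0 by apply/funext => y; rewrite dot_sum.
apply: (@continuous_big _ _ +%R 0 xpredT); first exact: add_continuous.
by move=> i _ y; exact: cvgM (cvg_cst _) (@coord_continuous R n 1 i 0 y).
Qed.

Lemma interior_halfspaces {I : finType} (g : I -> 'cV[R]_n) (b : I -> R) x :
  (forall i, dot (g i) x < b i) -> [set y | forall i, dot (g i) y <= b i]° x.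
Proof.
move=> x_lt; have : \forall y \near x, forall i, dot (g i) y < b i.
  apply: (@filter_forall _ _ _ (nbhs x) _) => i.
  apply: open_nbhs_nbhs; split; last exact: x_lt.
  apply: (@open_comp _ _ (dot (g i)) [set z | z < b i]) => [y _|].
    exact: continuous_dot.
  exact: open_lt.
by apply: filterS => y y_lt i; exact: ltW.
Qed.

Lemma interior_halfspace_lt {g d b x} :
  0 < dot g d -> [set y | dot g y <= b]° x -> dot g x < b.
Proof.
move=> gd_gt0 /nbhs_ballP[e /= e_gt0 x_e].
pose t := e / (`|d| + 1).
have d1_gt0 : 0 < `|d| + 1 by rewrite ltr_wpDl.
have t_gt0 : 0 < t by rewrite divr_gt0.
have : ball x e (x + t *: d).
  rewrite -ball_normE /= opprD addNKr normrN normrZ gtr0_norm //.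
  by rewrite (@lt_le_trans _ _ (t * (`|d| + 1))) ?ltr_pM2l ?ltrDl // divfK ?gt_eqF.
move=> /x_e /=; rewrite dotDr dotZr; apply: lt_le_trans.
by rewrite ltrDl mulr_gt0.
Qed.

End Halfspaces.

Lemma corridor_boundE {R : realFieldType} (f N r eps : R) :
  0 <= r -> r < N -> eps <= 0 ->
  (f / N ^+ 2 <= Num.max (1 - r / N) eps) = (f <= N ^+ 2 - r * N).
Proof.
move=> r_ge0 r_lt_N eps_le0; have N_gt0 : 0 < N := le_lt_trans r_ge0 r_lt_N.
have bound_gt0 : 0 < 1 - r / N by rewrite subr_gt0 ltr_pdivrMr // mul1r.
rewrite max_l; last exact: le_trans eps_le0 (ltW bound_gt0).
rewrite ler_pdivrMr ?exprn_gt0 //; congr (_ <= _).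
by field; rewrite gt_eqF.
Qed.

Section SafeCorridor.
Context {R : realType} {n K : nat} {mu : 'I_K -> 'cV[R]_n}.
Context {Sigma V : 'I_K -> 'M[R]_n} {sigma : 'I_K -> 'rV[R]_n} {kappa : 'I_K -> R}.
Hypothesis eig_Sigma : forall k, eig_decomp (Sigma k) (V k) (sigma k).

Local Notation A k := (inv_sqrt_from (V k) (sigma k)).
Local Notation r k := (conf_radius n (kappa k)).

Lemma conf_regionE x :
  conf_region mu Sigma kappa x <-> exists k, enorm (A k *m (x - mu k)) <= r k.
Proof.
suff ellipsoidE k : (((x - mu k)^T *m invmx (Sigma k) *m (x - mu k)) 0 0 <= r k ^+ 2)
                    = (enorm (A k *m (x - mu k)) <= r k).
  by split=> -[k x_in]; exists k; rewrite ?ellipsoidE // -ellipsoidE.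
by rewrite (invmx_eig_quad _ _ (eig_Sigma k)) -enorm_sqr ler_pXn2r ?nnegrE ?enorm_ge0 ?sqrtr_ge0.
Qed.

Context {p : 'cV[R]_n}.

Local Notation u k := (A k *m (mu k - p)).
Local Notation N k := (enorm (u k)).
Local Notation g k := ((A k)^T *m u k).

Lemma halfspace_outside_ellipsoid k x :
  dot (g k) x < N k ^+ 2 - r k * N k + dot (g k) p -> r k < enorm (A k *m (x - mu k)).
Proof.
rewrite -ltrBlDr -dotBr -dot_mulmxr => /halfspace_misses_ball.
by rewrite -mulmxBr opprB addrA subrK.
Qed.

Hypothesis p_out : ~ conf_region mu Sigma kappa p.

Lemma conf_radius_lt k : r k < N k.
Proof.
rewrite ltNge; apply/negP => p_in; apply/p_out/conf_regionE.
by exists k; rewrite -enormN -mulmxN opprB.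
Qed.

Lemma corridor_normal_gt0 k : 0 < dot (g k) (mu k - p).
Proof.
by rewrite -dot_mulmxr -enorm_sqr exprn_gt0 // (le_lt_trans _ (conf_radius_lt k)) ?sqrtr_ge0.
Qed.

Lemma safe_corridorE {eps} : eps <= 0 ->
  safe_corridor mu Sigma (fun k => A k) kappa eps p
  = [set x | forall k, dot (g k) x <= N k ^+ 2 - r k * N k + dot (g k) p].
Proof.
move=> eps_le0; apply/seteqP; split=> x corridor_x k; have := corridor_x k;
  rewrite /= (invmx_eig_quad _ _ (eig_Sigma k)) corridor_boundE ?sqrtr_ge0 ?conf_radius_lt //;
  by rewrite dot_mulmxr dotBr lerBlDr.
Qed.

End SafeCorridor.

Theorem proposition2 (R : realType) (n K : nat) (hn : (1 <= n)%N) (hK : (1 <= K)%N)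
  (mu : 'I_K -> 'cV[R]_n) (Sigma V : 'I_K -> 'M[R]_n) (sigma : 'I_K -> 'rV[R]_n)
  (kappa : 'I_K -> R) (eps : R)
  (hSigma : forall k, sym_posdef (Sigma k))
  (hdecomp : forall k, eig_decomp (Sigma k) (V k) (sigma k))
  (hkappa : forall k, 0 <= kappa k < 1)
  (heps : eps <= 0) :
  forall p : 'cV[R]_n, ~ conf_region mu Sigma kappa p ->
    let S := safe_corridor mu Sigma (fun k => inv_sqrt_from (V k) (sigma k)) kappa eps p in
    (interior S) p /\ interior S `<=` ~` conf_region mu Sigma kappa.
Proof.
move=> p p_out S; have r_lt_N := conf_radius_lt hdecomp p_out.
rewrite /S (safe_corridorE hdecomp p_out heps); split.
  apply: interior_halfspaces => k.
  by rewrite ltrDr subr_gt0 expr2 ltr_pM2r // (le_lt_trans _ (r_lt_N k)) ?sqrtr_ge0.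
move=> x x_in /(conf_regionE hdecomp)[k]; apply/negP; rewrite -ltNge.
apply: halfspace_outside_ellipsoid.
apply: interior_halfspace_lt (corridor_normal_gt0 hdecomp p_out k) _.
by move: x_in; apply: interiorS => y /(_ k).
Qed.
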